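(* Let $m\in\mathbb{N}$ and $\beta\in(1,\frac{m+2}{2})$. Every $x$ in the interior of the switch region $[\frac{1}{\beta},\frac{(m-1)\beta+1}{\beta(\beta-1)}]$ lies in the interior of some choice interval.
   Context: For $i\in\{1,\ldots,m\}$ the $i$-th choice interval is $[\frac{i}{\beta},\frac{(i-1)\beta+m-(i-1)}{\beta(\beta-1)}]$. *)

From mathcomp Require Import all_boot all_order all_algebra.
From mathcomp Require Import reals.
Set Implicit Arguments. Unset Strict Implicit. Unset Printing Implicit Defensive.
Import Order.TTheory GRing.Theory Num.Theory.
Local Open Scope ring_scope.

Definition switch_lo (R : realType) (beta : R) : R := 1 / beta.
Definition switch_hi (R : realType) (m : nat) (beta : R) : R :=
  ((m%:R - 1) * beta + 1) / (beta * (beta - 1)).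

Definition choice_lo (R : realType) (beta : R) (i : nat) : R := i%:R / beta.
Definition choice_hi (R : realType) (m : nat) (beta : R) (i : nat) : R :=
  ((i%:R - 1) * beta + (m%:R - (i%:R - 1))) / (beta * (beta - 1)).

(* Consecutive choice intervals overlap: [choice_lo (n+1) < choice_hi n] reduces, after
   clearing the common denominator beta(beta-1), to [2 beta < m + 2], independently of n.
   A chain of open intervals in which each one starts before the previous one ends covers
   the open interval from the first left end to the last right end, and the switch region
   is exactly [choice_lo 1, choice_hi m]. *)
From mathcomp Require Import all_boot all_order all_algebra.
From mathcomp Require Import reals.
From mathcomp Require Import ring lra.
Set Implicit Arguments. Unset Strict Implicit. Unset Printing Implicit Defensive.
Import Order.TTheory GRing.Theory Num.Theory.
Local Open Scope ring_scope.

Lemma open_itv_chain_cover (R : realDomainType) (a b : nat -> R) (m : nat) :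
  (0 < m)%N -> (forall n, a n.+1 < b n) ->
  forall x, a 1%N < x -> x < b m ->
  exists2 i, (1 <= i <= m)%N & x \in `]a i, b i[.
Proof.
move=> m_gt0 overlap x ax; elim: m m_gt0 => // -[_ _ xb | k IH _ xb].
  by exists 1%N; rewrite // in_itv /= ax.
have [xbk | bkx] := ltP x (b k.+1).
  by have [i /andP [i1 ik] xi] := IH isT xbk; exists i; rewrite ?i1 ?(leq_trans ik).
exists k.+2; first by rewrite leqnn.
rewrite in_itv /= xb andbT.
exact: lt_le_trans (overlap _) bkx.
Qed.

Lemma choice_lo_succ_lt_hi (R : realType) (m : nat) (beta : R) (n : nat) :
  1 < beta -> beta < (m%:R + 2) / 2 -> choice_lo beta n.+1 < choice_hi m beta n.
Proof.
move=> beta_gt1 beta_lt.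
have den_gt0 : 0 < beta * (beta - 1) by apply: mulr_gt0; lra.
have -> : choice_lo beta n.+1 = (n.+1%:R * (beta - 1)) / (beta * (beta - 1)).
  rewrite /choice_lo; field; apply/andP; split; rewrite gt_eqF //; lra.
rewrite /choice_hi ltr_pM2r ?invr_gt0 // -natr1; lra.
Qed.

Lemma switch_lo_choice (R : realType) (beta : R) : switch_lo beta = choice_lo beta 1.
Proof. by []. Qed.

Lemma switch_hi_choice (R : realType) (m : nat) (beta : R) :
  switch_hi m beta = choice_hi m beta m.
Proof. by rewrite /switch_hi /choice_hi; congr (_ / _); ring. Qed.

Lemma choice_count_gt0 (R : realType) (m : nat) (beta : R) :
  1 < beta -> beta < (m%:R + 2) / 2 -> (0 < m)%N.
Proof. by case: m => //=; lra. Qed.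

Theorem lemma2p5 (R : realType) (m : nat) (beta : R) :
  1 < beta -> beta < (m%:R + 2) / 2 ->
  forall x : R, x \in `]switch_lo beta, switch_hi m beta[ ->
  exists i : nat, (1 <= i <= m)%N /\
    x \in `]choice_lo beta i, choice_hi m beta i[.
Proof.
move=> beta_gt1 beta_lt x; rewrite in_itv /= => /andP [xlo xhi].
rewrite switch_lo_choice in xlo; rewrite switch_hi_choice in xhi.
have m_gt0 := choice_count_gt0 beta_gt1 beta_lt.
have overlap n := choice_lo_succ_lt_hi n beta_gt1 beta_lt.
have [i im xi] := open_itv_chain_cover m_gt0 overlap xlo xhi.
by exists i.
Qed.
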